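(* Let $\mathcal B$ be finite, $\eta>0$, $Q,\tilde Q\in\mathbb R^{\mathcal B}$, $V=\eta^{-1}\log\sum_be^{\eta Q(b)}$, $\tilde V=\eta^{-1}\log\sum_be^{\eta\tilde Q(b)}$, $A=Q-V\mathbf 1$, $\tilde A=\tilde Q-\tilde V\mathbf 1$, $\nu=\exp(\eta A)$, $\tilde\nu=\exp(\eta\tilde A)$, and let $B_A>0$ with $\max\{\|A\|_\infty,\|\tilde A\|_\infty\}\le B_A$. Then $$D_{\rm H}^2(\nu,\tilde\nu)\ge\frac{\eta^2}{8(1+\eta B_A)^2}\,\langle\nu,(\tilde A-A)^2\rangle_{\mathcal B}.$$
   Context: $D_{\rm H}^2(p,q)=\frac12\sum_b(\sqrt{p(b)}-\sqrt{q(b)})^2$; $\langle f,g\rangle_{\mathcal B}=\sum_bf(b)g(b)$; squares are entrywise. *)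

From mathcomp Require Import all_boot all_order all_algebra.
From mathcomp Require Import all_classical all_reals.
From mathcomp.analysis Require Import sequences exp.
Set Implicit Arguments. Unset Strict Implicit. Unset Printing Implicit Defensive.
Import Order.TTheory GRing.Theory Num.Theory.
Local Open Scope ring_scope.

Definition hellinger2 {R : realType} {B : finType} (p q : B -> R) : R :=
  2^-1 * \sum_(b : B) (Num.sqrt (p b) - Num.sqrt (q b)) ^+ 2.

Definition innerB {R : realType} {B : finType} (f g : B -> R) : R :=
  \sum_(b : B) f b * g b.

Definition softV {R : realType} {B : finType} (eta : R) (Q : B -> R) : R :=
  eta^-1 * ln (\sum_(b : B) expR (eta * Q b)).

Definition advA {R : realType} {B : finType} (eta : R) (Q : B -> R) : B -> R :=
  fun b => Q b - softV eta Q.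

Definition supnorm {R : realType} {B : finType} (f : B -> R) : R :=
  \big[Order.max/0]_(b : B) `|f b|.

From mathcomp Require Import all_boot all_order all_algebra.
From mathcomp Require Import all_classical all_reals.
From mathcomp.analysis Require Import sequences exp.
From mathcomp Require Import ring lra.
Import Order.TTheory GRing.Theory Num.Theory.
Local Open Scope ring_scope.

(* The inequality holds termwise.  Writing [a = eta A b] and [a' = eta At b], the
   Hellinger term is [(expR (a/2) - expR (a'/2))^2 = expR a * (1 - expR t)^2] with
   [t = (a' - a)/2], and [|t| <= eta BA] since both advantages are bounded.  On
   [|t| <= c] one has [|1 - expR t| >= |t| / (1 + c)]: for [t >= 0] this follows
   from [expR t >= 1 + t], for [t < 0] from [expR t <= 1 / (1 - t)]. *)

Section HellingerExpBound.
Set Implicit Arguments. Unset Strict Implicit.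
Variable R : realType.

Lemma sqrtr_expR (z : R) : Num.sqrt (expR z) = expR (z / 2).
Proof.
by rewrite {1}(splitr z) expRD -expr2 sqrtr_sqr ger0_norm // ltW ?expR_gt0.
Qed.

Lemma norm_le_1DM_norm_1BexpR (t c : R) :
  `|t| <= c -> `|t| <= (1 + c) * `|1 - expR t|.
Proof.
move=> tc; have [t0|t0] := leP 0 t.
  have expRt := expR_ge1Dx t.
  rewrite ger0_norm // in tc *; rewrite ler0_norm; nra.
have expRt1 : expR t <= 1 by rewrite -expR0 ler_expR ltW.
have expRtN : expR t * expR (- t) = 1 by rewrite -expRD subrr expR0.
have := expR_ge1Dx (- t); have := expR_gt0 t.
rewrite ltr0_norm // in tc *; rewrite ger0_norm; nra.
Qed.

Lemma sqr_le_1DM_1BexpR (t c : R) :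
  `|t| <= c -> t ^+ 2 <= (1 + c) ^+ 2 * (1 - expR t) ^+ 2.
Proof.
move=> tc; have := norm_le_1DM_norm_1BexpR tc.
rewrite -(real_normK (num_real t)) -(real_normK (num_real (1 - expR t))).
have := normr_ge0 t; have := normr_ge0 (1 - expR t); nra.
Qed.

Lemma expR_mul_sqrB_le (a b c : R) : `|a| <= c -> `|b| <= c ->
  expR a * (b - a) ^+ 2 <= 4 * (1 + c) ^+ 2 * (expR (a / 2) - expR (b / 2)) ^+ 2.
Proof.
move=> ac bc; set t := (b - a) / 2.
have tc : `|t| <= c.
  by rewrite /t normrM normfV normr_nat; have := ler_normB b a; lra.
have -> : expR (b / 2) = expR (a / 2) * expR t.
  by rewrite -expRD /t; congr expR; field.
have -> : expR a = expR (a / 2) ^+ 2 by rewrite -sqrtr_expR sqr_sqrtr // ltW ?expR_gt0.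
have -> : (b - a) ^+ 2 = 4 * t ^+ 2 by rewrite /t; field.
have := sqr_le_1DM_1BexpR tc; have := sqr_ge0 (expR (a / 2)).
set E := expR (a / 2); nra.
Qed.

Lemma normr_le_supnorm (B : finType) (f : B -> R) (b : B) :
  `|f b| <= supnorm f.
Proof. exact: le_bigmax. Qed.

Lemma hellinger2_expR_ge (B : finType) (f g : B -> R) (c : R) :
  (forall b, `|f b| <= c) -> (forall b, `|g b| <= c) ->
  innerB (fun b => expR (f b)) (fun b => (g b - f b) ^+ 2) / (8 * (1 + c) ^+ 2)
    <= hellinger2 (fun b => expR (f b)) (fun b => expR (g b)).
Proof.
move=> fc gc; rewrite /hellinger2 /innerB mulr_suml mulr_sumr.
apply: ler_sum => b _; rewrite !sqrtr_expR ler_pdivrMr; last first.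
  by have := le_trans (normr_ge0 _) (fc b); nra.
have := expR_mul_sqrB_le (fc b) (gc b); lra.
Qed.

End HellingerExpBound.

Theorem mainTheorem11 (R : realType) (B : finType) (eta : R) (Q Qt : B -> R)
  (BA : R) (heta : 0 < eta) (hBA : 0 < BA)
  (hA : Order.max (supnorm (advA eta Q)) (supnorm (advA eta Qt)) <= BA) :
  let A := advA eta Q in
  let At := advA eta Qt in
  let nu := fun b => expR (eta * A b) in
  let nut := fun b => expR (eta * At b) in
  hellinger2 nu nut >=
    eta ^+ 2 / (8 * (1 + eta * BA) ^+ 2) *
      innerB nu (fun b => (At b - A b) ^+ 2).
Proof.
cbv zeta; set A := advA eta Q; set At := advA eta Qt.
set nu := fun b => expR (eta * A b).
move: hA; rewrite ge_max => /andP[AB AtB].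
have scaled_bound (h : B -> R) b : supnorm h <= BA -> `|eta * h b| <= eta * BA.
  move=> hB; rewrite normrM gtr0_norm // ler_pM2l //.
  exact: le_trans (normr_le_supnorm h b) hB.
have := hellinger2_expR_ge (scaled_bound A ^~ AB) (scaled_bound At ^~ AtB).
have scaled_inner : innerB nu (fun b => (eta * At b - eta * A b) ^+ 2)
    = eta ^+ 2 * innerB nu (fun b => (At b - A b) ^+ 2).
  by rewrite /innerB mulr_sumr; apply: eq_bigr => b _; ring.
by rewrite scaled_inner [X in X <= _ -> _]mulrAC.
Qed.
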